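(* Let $\alpha_n\uparrow\infty$ and for each $n$ let $\pi_n\in\Pi^{\alpha_n}$. Then $\pi_n\to B^*:=\{e_i:1\le i\le m\}$ (i.e., the distance from $\pi_n$ to $B^*$ tends to $0$), where $e_i$ are the unit coordinate vectors of $\mathbb R^m$.
   Context: $\mathcal G=(\mathcal V,\mathcal E)$ is a directed irreducible graph with $|\mathcal V|=m>1$, $\mathcal N(i)=\{j:(i,j)\in\mathcal E\}$, with $i\in\mathcal N(i)$ for all $i$ and $j\in\mathcal N(i)\iff i\in\mathcal N(j)$; $a_{ij}=\mathbb I\{j\in\mathcal N(i)\}$. Rewards $\mu_i>0$. $\mathcal S_m$ is the unit simplex in $\mathbb R^m$. For $\alpha>0$, $f^\alpha_i(x)=(\mu_ix_i)^\alpha$, $\Psi^\alpha(x)=\frac1{2\alpha}\sum_{i,j}a_{ij}f^\alpha_i(x)f^\alpha_j(x)$, and $\Pi^\alpha:=\{\pi\in\mathcal S_m:\pi\text{ is a local maximum of }\Psi^\alpha\text{ on }\mathcal S_m\}$. *)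

From HB Require Import structures.
From mathcomp Require Import all_boot all_order all_algebra.
From mathcomp Require Import all_classical all_reals all_analysis.
Set Implicit Arguments. Unset Strict Implicit. Unset Printing Implicit Defensive.
Import Order.TTheory GRing.Theory Num.Theory.
Import numFieldNormedType.Exports.
Local Open Scope classical_set_scope.
Local Open Scope ring_scope.

Section Defs.
Variables (R : realType) (m : nat).

Definition simplex : set ('I_m -> R) :=
  [set x | (forall i, 0 <= x i) /\ \sum_(i < m) x i = 1].

Definition unitvec (i : 'I_m) : 'I_m -> R := fun j => (i == j)%:R.

Definition edist (x y : 'I_m -> R) : R :=
  Num.sqrt (\sum_(i < m) (x i - y i) ^+ 2).

Definition fa (mu : 'I_m -> R) (alpha : R) (x : 'I_m -> R) (i : 'I_m) : R :=
  (mu i * x i) `^ alpha.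

(* Psi^alpha(x) = 1/(2 alpha) sum_{i,j} a_ij f_i(x) f_j(x), a_ij = 1{j in N(i)} *)
Definition Psi (a : rel 'I_m) (mu : 'I_m -> R) (alpha : R) (x : 'I_m -> R) : R :=
  (2 * alpha)^-1 *
  \sum_(i < m) \sum_(j < m) (a i j)%:R * fa mu alpha x i * fa mu alpha x j.

Definition local_max_simplex (a : rel 'I_m) (mu : 'I_m -> R) (alpha : R)
    (p : 'I_m -> R) : Prop :=
  simplex p /\
  exists2 eps : R, 0 < eps &
    forall y, simplex y -> edist y p < eps -> Psi a mu alpha y <= Psi a mu alpha p.

Definition PiSet (a : rel 'I_m) (mu : 'I_m -> R) (alpha : R) : set ('I_m -> R) :=
  [set p | local_max_simplex a mu alpha p].

Definition distB (x : 'I_m -> R) : R :=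
  inf [set d | exists i : 'I_m, d = edist x (unitvec i)].

End Defs.

(* For alpha > 1 every local maximum of Psi^alpha on the simplex is in fact a
   vertex e_i, so distB(pi_n) is eventually 0.  The argument:
   - z |-> z^alpha is strictly convex on ]0, +oo[ for alpha > 1
     (powR_tangent_lt, powR_midpoint_lt);
   - Psi^alpha(x) = form(f^alpha(x)) / (2 alpha), where form is the quadratic
     form of the adjacency relation; a polarization identity gives a strict
     midpoint inequality for it along vectors moving mass between two
     coordinates (adj_form_midpoint_lt);
   - if a local maximum p had two positive coordinates i <> j, the points
     obtained by transferring +-t of mass between i and j stay in the simplex
     and near p (transfer_simplex, edist_transfer), yet their average Psi^alpha
     exceeds Psi^alpha(p) (local_max_support_le1);
   - a point of the simplex with a single positive coordinate is a vertex, at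
     which distB vanishes (simplex_support_le1_vertex, distB_vertex). *)
From Pilot Require Import Defs.
From HB Require Import structures.
From mathcomp Require Import all_boot all_order all_algebra.
From mathcomp Require Import all_classical all_reals all_analysis.
From mathcomp Require Import ring lra.
Set Implicit Arguments. Unset Strict Implicit. Unset Printing Implicit Defensive.
Import Order.TTheory GRing.Theory Num.Theory.
Import numFieldNormedType.Exports.
Local Open Scope classical_set_scope.
Local Open Scope ring_scope.

Section PowerConvexity.
Variable R : realType.

Lemma powR_tangent_lt (al c y : R) : 1 < al -> 0 < c -> 0 < y -> y != c ->
  c `^ al + al * c `^ (al - 1) * (y - c) < y `^ al.
Proof.
move=> al1 c0 y0 yc.
have al0 : 0 < al by apply: lt_trans al1.
pose k := al * c `^ (al - 1).
pose psi := fun z : R => z `^ al - k * z.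
have psi_der (z : R) : 0 < z -> is_derive z 1 psi (al * z `^ (al - 1) - k * 1).
  by move=> z0; apply: is_deriveB; exact: is_derive1_powR.
have psi'E (z : R) : 0 < z -> derive1 psi z = al * z `^ (al - 1) - k.
  by move=> z0; rewrite derive1E; have [_ ->] := psi_der z z0; rewrite mulr1.
have psi_derivable (u v : R) : 0 < u -> {in `]u, v[, forall z, derivable psi z 1}.
  move=> u0 z; rewrite in_itv /= => /andP[uz _].
  by have [] := psi_der z (lt_trans u0 uz).
have psi_cont (u v : R) : 0 < u -> {within `[u, v], continuous psi}.
  move=> u0; apply: derivable_within_continuous => z.
  rewrite in_itv /= => /andP[uz _].
  by have [] := psi_der z (lt_le_trans u0 uz).
(* psi is decreasing on ]0, c] and increasing on [c, +oo[, so c is its strict minimum *)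
suff : psi c < psi y by rewrite /psi -/k; lra.
have [cy|yc'|ceq] := ltgtP c y; last by rewrite ceq eqxx in yc.
- apply: (gtr0_derive1_lt_cc (psi_derivable c y c0)) => //.
  + move=> z; rewrite in_itv /= => /andP[cz _].
    rewrite psi'E ?(lt_trans c0 cz)// subr_gt0 /k ltr_pM2l//.
    by apply: gt0_ltr_powR; rewrite ?subr_gt0 // nnegrE ltW // (lt_trans c0).
  + exact: psi_cont.
  + by rewrite in_itv /= lexx ltW.
  + by rewrite in_itv /= lexx ltW.
- apply: (ltr0_derive1_lt_cc (psi_derivable y c y0)) => //.
  + move=> z; rewrite in_itv /= => /andP[yz zc].
    rewrite psi'E ?(lt_trans y0 yz)// subr_lt0 /k ltr_pM2l//.
    by apply: gt0_ltr_powR; rewrite ?subr_gt0 // nnegrE ltW // (lt_trans y0).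
  + exact: psi_cont.
  + by rewrite in_itv /= lexx ltW.
  + by rewrite in_itv /= lexx ltW.
Qed.

(* Strict midpoint convexity of z |-> z^al, obtained by averaging the tangent
   inequality at c over the two points c + t and c - t. *)
Lemma powR_midpoint_lt (al c t : R) : 1 < al -> 0 < t -> t < c ->
  2 * c `^ al < (c + t) `^ al + (c - t) `^ al.
Proof.
move=> al1 t0 tc; have c0 : 0 < c by apply: lt_trans tc.
have tp := @powR_tangent_lt al c (c + t) al1 c0.
have tm := @powR_tangent_lt al c (c - t) al1 c0.
have /tp {}tp : 0 < c + t by rewrite addr_gt0.
have /tm {}tm : 0 < c - t by rewrite subr_gt0.
have /tp {}tp : c + t != c by rewrite gt_eqF // ltrDl.
have /tm {}tm : c - t != c by rewrite lt_eqF // gtrBl.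
move: tp tm; set K := al * _; rewrite addrAC subrr add0r addrAC subrr add0r.
lra.
Qed.
End PowerConvexity.

Lemma sum_supported_pair (V : nmodType) (m : nat) (i j : 'I_m) (g : 'I_m -> V) :
  i != j -> (forall k, k != i -> k != j -> g k = 0) ->
  \sum_(k < m) g k = g i + g j.
Proof.
move=> ij g0; rewrite (bigD1 i) //= (bigD1 j) /=; last by rewrite eq_sym.
by rewrite big1 ?addr0 // => k /andP[ki kj]; exact: g0.
Qed.

Section AdjacencyForm.
Variables (R : realFieldType) (m : nat) (a : rel 'I_m).

Definition adj_form (v : 'I_m -> R) : R :=
  \sum_(k < m) \sum_(l < m) (a k l)%:R * v k * v l.

Lemma adj_form_midpoint_defect (u w z : 'I_m -> R) :
  adj_form u + adj_form w - 2 * adj_form z =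
  2^-1 * (\sum_(k < m) \sum_(l < m)
            (a k l)%:R * ((u k + w k) * (u l + w l) - 4 * (z k * z l))
          + adj_form (fun k => u k - w k)).
Proof.
rewrite /adj_form mulr_sumr -!big_split -sumrB /= mulr_sumr; apply: eq_bigr => k _.
rewrite mulr_sumr -!big_split -sumrB /= mulr_sumr; apply: eq_bigr => l _.
by field.
Qed.

(* On vectors supported on two indices i, j at which a is reflexive and
   symmetric, the form is d_i^2 + d_j^2 or (d_i + d_j)^2, hence nonnegative. *)
Lemma adj_form_pair_ge0 (i j : 'I_m) (d : 'I_m -> R) :
  i != j -> a i i -> a j j -> a i j = a j i ->
  (forall k, k != i -> k != j -> d k = 0) -> 0 <= adj_form d.
Proof.
move=> ij aii ajj aij d0.
rewrite /adj_form (sum_supported_pair ij); last first.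
  by move=> k ki kj; apply: big1 => l _; rewrite d0 // mulr0 mul0r.
rewrite !(sum_supported_pair ij); try by move=> l li lj; rewrite (d0 l) // mulr0.
rewrite aii ajj -aij; case: (a i j) => /=; rewrite ?mul1r ?mul0r ?add0r ?addr0.
  have -> : d i * d i + d i * d j + (d j * d i + d j * d j) = (d i + d j) ^+ 2 by ring.
  exact: sqr_ge0.
by rewrite addr_ge0 // -expr2 sqr_ge0.
Qed.

Lemma adj_form_midpoint_lt (i j : 'I_m) (u w z : 'I_m -> R) :
  i != j -> a i i -> a j j -> a i j = a j i ->
  (forall k, k != i -> k != j -> u k = w k) ->
  (forall k, 0 <= z k) -> (forall k, 2 * z k <= u k + w k) ->
  2 * z i < u i + w i ->
  2 * adj_form z < adj_form u + adj_form w.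
Proof.
move=> ij aii ajj aij uw z0 zuw zuwi.
rewrite -subr_gt0 adj_form_midpoint_defect pmulr_rgt0 ?invr_gt0 //.
have term_ge0 (k l : 'I_m) :
    0 <= (a k l)%:R * ((u k + w k) * (u l + w l) - 4 * (z k * z l)).
  apply: mulr_ge0 => //.
  by have := zuw k; have := zuw l; have := z0 k; have := z0 l; nra.
apply: ltr_pwDl; last first.
  by apply: (adj_form_pair_ge0 ij) => // k ki kj; rewrite uw ?subrr.
rewrite (bigD1 i) //= (bigD1 i) //= -addrA; apply: ltr_pwDl.
  by rewrite aii mul1r; have := z0 i; nra.
apply: addr_ge0; first by apply: sumr_ge0 => l _.
by apply: sumr_ge0 => k _; apply: sumr_ge0 => l _.
Qed.

End AdjacencyForm.

Section Transfer.
Variables (R : realType) (m : nat).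
Implicit Types (p : 'I_m -> R) (i j k : 'I_m) (t : R).

(* The point of R^m obtained from p by moving the mass t from coordinate j to
   coordinate i; these are the competitors used against a local maximum. *)
Definition transfer p i j t : 'I_m -> R :=
  fun k => p k + t * ((i == k)%:R - (j == k)%:R).

Section Coordinates.
Variables (p : 'I_m -> R) (i j : 'I_m) (t : R).
Hypothesis ij : i != j.

Lemma transfer_at_src : transfer p i j t i = p i + t.
Proof. by rewrite /transfer eqxx eq_sym (negbTE ij) subr0 mulr1. Qed.

Lemma transfer_at_dst : transfer p i j t j = p j - t.
Proof. by rewrite /transfer eqxx (negbTE ij) sub0r mulrN1. Qed.

Lemma transfer_elsewhere k : k != i -> k != j -> transfer p i j t k = p k.
Proof.
by move=> ki kj; rewrite /transfer eq_sym (negbTE ki) eq_sym (negbTE kj) subrr mulr0 addr0.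
Qed.

Lemma transfer_simplex : simplex p -> - p i <= t <= p j -> simplex (transfer p i j t).
Proof.
move=> [p_ge0 p_sum] /andP[ti tj]; split.
- move=> k; have [->|ki] := eqVneq k i; first by rewrite transfer_at_src -lerBlDl sub0r.
  have [->|kj] := eqVneq k j; first by rewrite transfer_at_dst subr_ge0.
  by rewrite transfer_elsewhere.
- rewrite /transfer big_split /= p_sum -mulr_sumr (sum_supported_pair ij).
    by rewrite !eqxx eq_sym (negbTE ij) subr0 sub0r subrr mulr0 addr0.
  by move=> k ki kj; rewrite eq_sym (negbTE ki) eq_sym (negbTE kj) subrr.
Qed.

Lemma edist_transfer : Defs.edist (transfer p i j t) p = Num.sqrt (2 * t ^+ 2).
Proof.
rewrite /Defs.edist (sum_supported_pair ij); last first.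
  by move=> k ki kj; rewrite transfer_elsewhere // subrr expr0n.
rewrite transfer_at_src transfer_at_dst; congr Num.sqrt.
by rewrite addrAC subrr add0r addrAC subrr add0r sqrrN -mulr2n mulr_natl.
Qed.

End Coordinates.
End Transfer.

Section LocalMaxima.
Variables (R : realType) (m : nat) (a : rel 'I_m) (mu : 'I_m -> R).
Hypothesis a_refl : forall i, a i i.
Hypothesis a_sym : forall i j, a i j = a j i.
Hypothesis mu_gt0 : forall i, 0 < mu i.

Lemma fa_spread_lt (al t : R) (x y z : 'I_m -> R) (k : 'I_m) :
  1 < al -> 0 < t < x k -> y k = x k + t -> z k = x k - t ->
  2 * fa mu al x k < fa mu al y k + fa mu al z k.
Proof.
move=> al1 /andP[t0 tx]; rewrite /fa => -> ->; rewrite mulrDr mulrBr.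
by apply: powR_midpoint_lt; rewrite ?ltr_pM2l ?mulr_gt0.
Qed.

(* For alpha > 1, a local maximum of Psi^alpha on the simplex has at most one
   positive coordinate: transferring a little mass t between two positive
   coordinates in either direction would increase Psi^alpha on average. *)
Lemma local_max_support_le1 (al : R) (p : 'I_m -> R) :
  1 < al -> local_max_simplex a mu al p ->
  forall i j, 0 < p i -> 0 < p j -> i = j.
Proof.
move=> al1 [p_simplex [eps eps0 p_max]] i j pi0 pj0.
apply/eqP; apply: contraT => ij.
have al0 : 0 < al by apply: lt_trans al1.
pose q := Num.min (Num.min (p i) (p j)) eps.
have [qi qj qe] : [/\ q <= p i, q <= p j & q <= eps].
  by rewrite /q !ge_min !lexx !orbT.
pose t := q / 2.
have t0 : 0 < t by rewrite divr_gt0 // !lt_min pi0 pj0 eps0.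
have [ti tj te] : [/\ t < p i, t < p j & 2 * t <= eps] by rewrite /t; split; lra.
have competitor (s : R) : s ^+ 2 = t ^+ 2 -> - p i <= s <= p j ->
    Psi a mu al (transfer p i j s) <= Psi a mu al p.
  move=> st sij; apply: p_max; first exact: transfer_simplex.
  rewrite edist_transfer // st -(gtr0_norm eps0) -sqrtr_sqr ltr_sqrt ?exprn_gt0 //.
  by nra.
have /competitor le_plus : t ^+ 2 = t ^+ 2 by [].
have /competitor le_minus : (- t) ^+ 2 = t ^+ 2 by rewrite sqrrN.
have /le_plus {}le_plus : - p i <= t <= p j by apply/andP; split; lra.
have /le_minus {}le_minus : - p i <= - t <= p j by apply/andP; split; lra.
have gain : 2 * adj_form a (fa mu al p) <
    adj_form a (fa mu al (transfer p i j t)) + adj_form a (fa mu al (transfer p i j (- t))).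
  have spread_i : 2 * fa mu al p i <
      fa mu al (transfer p i j t) i + fa mu al (transfer p i j (- t)) i.
    by apply: (fa_spread_lt (t := t)); rewrite ?transfer_at_src ?t0 ?ti.
  have spread_j : 2 * fa mu al p j <
      fa mu al (transfer p i j t) j + fa mu al (transfer p i j (- t)) j.
    rewrite addrC; apply: (fa_spread_lt (t := t)); rewrite ?transfer_at_dst ?opprK ?t0 ?tj //.
  apply: (adj_form_midpoint_lt ij) => //.
  - by move=> k ki kj; rewrite /fa !transfer_elsewhere.
  - by move=> k; apply: powR_ge0.
  - move=> k; have [->|ki] := eqVneq k i; first exact: ltW.
    have [->|kj] := eqVneq k j; first exact: ltW.
    by rewrite /fa !transfer_elsewhere //; lra.
have PsiE (y : 'I_m -> R) : Psi a mu al y = (2 * al)^-1 * adj_form a (fa mu al y) by [].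
move: le_plus le_minus; rewrite !PsiE !ler_pM2l ?invr_gt0 ?mulr_gt0 //.
lra.
Qed.

End LocalMaxima.

Section Vertices.
Variables (R : realType) (m : nat).

(* A point of the simplex with at most one positive coordinate is a vertex e_i:
   some coordinate is positive since the mass is 1, and it then carries all of it. *)
Lemma simplex_support_le1_vertex (p : 'I_m -> R) :
  simplex p -> (forall i j, 0 < p i -> 0 < p j -> i = j) ->
  exists i, forall k, p k = unitvec R i k.
Proof.
move=> [p_ge0 p_sum] p_supp.
have [i pi0] : exists i, 0 < p i.
  apply: contrapT => no_pos; move/eqP: p_sum; apply/negP.
  rewrite big1 ?(@eq_sym _ 0) ?oner_eq0 // => k _.
  by apply/eqP; rewrite eq_le p_ge0 andbT leNgt; apply/negP => pk0; apply: no_pos; exists k.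
have p_off k : k != i -> p k = 0.
  move=> ki; apply/eqP; rewrite eq_le p_ge0 andbT leNgt; apply/negP => pk0.
  by move/eqP: ki; apply; apply: p_supp.
exists i => k; rewrite /unitvec.
have [<-|ik] := eqVneq i k; last by rewrite p_off // eq_sym.
by move: p_sum; rewrite (bigD1 i) //= big1 ?addr0 // => l li; apply: p_off.
Qed.

Lemma distB_vertex (p : 'I_m -> R) (i : 'I_m) :
  (forall k, p k = unitvec R i k) -> distB p = 0.
Proof.
move=> p_vertex.
set S := [set d | exists k : 'I_m, d = Defs.edist p (unitvec R k)].
have S0 : S 0.
  exists i; rewrite /Defs.edist big1 ?sqrtr0 // => k _.
  by rewrite p_vertex subrr expr0n.
have S_ge0 : lbound S 0 by move=> y [k ->]; apply: sqrtr_ge0.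
rewrite /distB -/S; apply/eqP; rewrite eq_le; apply/andP; split.
- by apply: (ge_inf _ S0); exists 0.
- by apply: lb_le_inf => //; exists 0.
Qed.

End Vertices.

Theorem lemma4 (R : realType) (m : nat) (a : rel 'I_m) (mu : 'I_m -> R)
    (alpha : nat -> R) (pi : nat -> 'I_m -> R) :
  (1 < m)%N ->
  (forall i, a i i) ->
  (forall i j, a i j = a j i) ->
  (forall i j, connect a i j) ->
  (forall i, 0 < mu i) ->
  (forall n, 0 < alpha n) ->
  (forall n, alpha n <= alpha n.+1) ->
  alpha n @[n --> \oo] --> +oo ->
  (forall n, PiSet a mu (alpha n) (pi n)) ->
  distB (pi n) @[n --> \oo] --> 0.
Proof.
move=> _ a_refl a_sym _ mu_gt0 _ _ alpha_oo pi_max.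
(* eventually alpha_n > 1, and from then on pi_n is a vertex *)
apply: cvg_near_cst.
have : \forall n \near \oo, 1 < alpha n by move/cvgryPgt: alpha_oo => /(_ 1).
apply: filterS => n alpha_gt1.
have [pi_simplex _] := pi_max n.
have supp := local_max_support_le1 a_refl a_sym mu_gt0 alpha_gt1 (pi_max n).
have [i pi_vertex] := simplex_support_le1_vertex pi_simplex supp.
exact: distB_vertex pi_vertex.
Qed.
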